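(* Let $t\ge 1$ and let $0<m_1<m_2<\dots<m_t$ be integers. Then the multi-delimiter code $D_{m_1,\ldots,m_t}$ is complete, i.e. for every binary word $w\notin D_{m_1,\ldots,m_t}$ the set $D_{m_1,\ldots,m_t}\cup\{w\}$ is not uniquely decodable.
   Context: Binary words are elements of $\{0,1\}^*$; $1^r$ denotes the word of $r$ consecutive ones. For integers $0<m_1<\dots<m_t$, the multi-delimiter code $D_{m_1,\ldots,m_t}$ is the set consisting of the words $1^{m_i}0$ for $i=1,\dots,t$, together with all binary words $w$ satisfying: (i) for no $i$ does $w$ start with $1^{m_i}0$; (ii) $w$ ends with the suffix $01^{m_i}0$ for some $i$; (iii) for every $i$, the word $01^{m_i}0$ occurs in $w$ nowhere except as a suffix of $w$. A set of binary words is uniquely decodable if every finite concatenation of its words has a unique factorization into words of the set. *)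

From mathcomp Require Import all_boot.
Set Implicit Arguments. Unset Strict Implicit. Unset Printing Implicit Defensive.

(* Binary words: seq bool, with true = 1, false = 0. *)
Definition word := seq bool.

Definition ones_zero (r : nat) : word := rcons (nseq r true) false.
Definition delim (r : nat) : word := false :: ones_zero r.

Definition MDcode (ms : seq nat) (w : word) : Prop :=
  (exists2 m, m \in ms & w = ones_zero m) \/
  ( (forall m, m \in ms -> ~ prefix (ones_zero m) w) /\
    (exists2 m, m \in ms & suffix (delim m) w) /\
    (forall m, m \in ms -> forall u v : word,
        w = u ++ delim m ++ v -> v = [::]) ).

Definition uniquely_decodable (C : word -> Prop) : Prop :=
  forall xs ys : seq word,
    (forall x, x \in xs -> C x) -> (forall y, y \in ys -> C y) ->
    flatten xs = flatten ys -> xs = ys.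

From mathcomp Require Import all_boot zify.

Set Implicit Arguments.
Unset Strict Implicit.
Unset Printing Implicit Defensive.

(** A delimiter [0 1^m 0] is itself a codeword, and every word of the form
    [y 0 1^m 0] factorizes over the code: greedily strip a leading [1^i 0]
    if there is one, and otherwise the shortest prefix ending with some
    delimiter, which is a codeword by minimality.  Cutting right after a
    [0] keeps the remainder of that form (or empty, or [1^m 0]).  Hence if
    [w] is added, [w 0 1^m 0] has the factorization [w, 0 1^m 0] and a
    factorization into codewords only; unique decodability would make [w]
    the first codeword of the latter. *)

Lemma cat_eq_cat_cases (T : Type) (a b c d : seq T) : a ++ b = c ++ d ->
  (exists e, a = c ++ e /\ d = e ++ b) \/ (exists e, c = a ++ e /\ b = e ++ d).
Proof.
elim: a c => [|x a IH] [|y c] /= eq_ac.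
- by left; exists [::].
- by right; exists (y :: c).
- by left; exists (x :: a).
- case: eq_ac => -> /IH [[e [-> ->]]|[e [-> ->]]].
  + by left; exists e.
  + by right; exists e.
Qed.

Definition delim_tail (m : nat) (z : word) : Prop :=
  z = [::] \/ z = ones_zero m \/ exists y, z = y ++ delim m.

Definition ends_with_delim (ms : seq nat) (x : word) : bool :=
  has (fun j => suffix (delim j) x) ms.

Definition code_concat (ms : seq nat) (z : word) : Prop :=
  exists2 ys : seq word, (forall x, x \in ys -> MDcode ms x) & flatten ys = z.

Lemma delim_tail_cat (m : nat) (y : word) : delim_tail m (y ++ delim m).
Proof. by right; right; exists y. Qed.

Lemma delim_tail_drop_zero (m : nat) (p r y : word) :
  rcons p false ++ r = y ++ delim m -> delim_tail m r.
Proof.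
move=> /cat_eq_cat_cases [[e [def_y def_r]]|[e [_ ->]]]; last first.
  exact: delim_tail_cat.
case: e def_y def_r => [|x e] def_y.
  by move=> /= <-; exact: (delim_tail_cat m [::]).
case=> x_false def_ones_zero; subst x.
case: e def_y def_ones_zero => [|x e] def_y; first by move=> /= <-; right; left.
have false_in_e : false \in x :: e.
  have := congr1 (last true) def_y.
  by rewrite last_rcons last_cat /= => ->; apply: mem_last.
rewrite /ones_zero -cats1.
case/cat_eq_cat_cases => [[f [def_ones _]]|[[|z f] [def_ones]]].
- suff : false \in nseq m true by rewrite mem_nseq andbF.
  by rewrite def_ones mem_cat false_in_e.
- by move: false_in_e; rewrite def_ones cats0 mem_nseq andbF.
- by case=> _; case: f {def_ones} => //= <-; left.
Qed.

Section ShortestDelimPrefix.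

Variables (ms : seq nat) (z : word) (k : nat).
Hypothesis no_ones_zero_prefix : forall i, i \in ms -> ~ prefix (ones_zero i) z.
Hypothesis delim_end : ends_with_delim ms (take k z).
Hypothesis k_min : forall k', ends_with_delim ms (take k' z) -> k <= k'.

Lemma size_take_shortest_delim : size (take k z) = k.
Proof.
rewrite size_take_min; apply/minn_idPl.
rewrite leqNgt; apply/negP => lt_zk.
have := @k_min (size z); rewrite take_size -{1}(take_oversize (ltnW lt_zk)).
by move=> /(_ delim_end); lia.
Qed.

Lemma MDcode_shortest_delim_prefix : MDcode ms (take k z).
Proof.
right; split; [|split].
- move=> i i_ms pre_i; apply: no_ones_zero_prefix i_ms _.
  exact: prefix_trans pre_i (prefix_take _ _).
- by case/hasP: delim_end => j; exists j.
- move=> i i_ms u [//|b v] def_take; exfalso.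
  have lt_k : size (u ++ delim i) < k.
    by rewrite -size_take_shortest_delim def_take catA !size_cat /=; lia.
  suff : k <= size (u ++ delim i) by rewrite leqNgt lt_k.
  apply: k_min; apply/hasP; exists i => //.
  rewrite -(take_takel _ (ltnW lt_k)) def_take catA take_size_cat //.
  exact: suffix_suffix.
Qed.

End ShortestDelimPrefix.

Lemma code_concat_cons (ms : seq nat) (x z : word) :
  MDcode ms x -> code_concat ms z -> code_concat ms (x ++ z).
Proof.
move=> code_x [ys code_ys <-]; exists (x :: ys) => // x'.
by rewrite inE => /orP [/eqP ->|/code_ys].
Qed.

Lemma code_concat_delim_tail (ms : seq nat) (m : nat) (z : word) :
  m \in ms -> delim_tail m z -> code_concat ms z.
Proof.
move=> m_ms; have [n] := ubnP (size z); elim: n z => // n IH z /ltnSE size_z.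
case=> [->|[->|[y def_z]]].
- by exists [::].
- rewrite -[ones_zero m]cats0; apply: code_concat_cons; last by exists [::].
  by left; exists m.
have [|no_pre] := boolP (has (fun i => prefix (ones_zero i) z) ms).
  case/hasP => i i_ms /prefixP [r def_r]; rewrite def_r.
  apply: code_concat_cons; first by left; exists i.
  apply: IH; first by move: size_z; rewrite def_r size_cat size_rcons; lia.
  by apply: (@delim_tail_drop_zero m (nseq i true) _ y); rewrite -def_z.
have ex_delim : exists k, ends_with_delim ms (take k z).
  exists (size z); apply/hasP; exists m => //.
  by rewrite take_size def_z suffix_suffix.
case: (ex_minnP ex_delim) => k delim_k k_min.
have no_pre' : forall i, i \in ms -> ~ prefix (ones_zero i) z.
  by move=> i i_ms pre_i; case/hasP: no_pre; exists i.
have size_k := size_take_shortest_delim delim_k k_min.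
case/hasP: (delim_k) => j _ /suffixP [u def_take].
rewrite -(cat_take_drop k z); apply: code_concat_cons.
  exact: MDcode_shortest_delim_prefix.
apply: IH.
  have le_kz : k <= size z by rewrite -size_k size_take_min geq_minr.
  by move: size_k; rewrite def_take size_drop size_cat /=; lia.
apply: (@delim_tail_drop_zero m (u ++ false :: nseq j true) _ y).
rewrite -def_z -{2}(cat_take_drop k z) def_take /delim /ones_zero.
by rewrite -!cats1 -!catA /= -catA.
Qed.

(* Only [ms != [::]] is needed: completeness rests on one delimiter. *)
Theorem theorem3 (ms : seq nat) :
  ms != [::] -> 0 < head 0 ms -> sorted ltn ms ->
  forall w : seq bool, ~ MDcode ms w ->
    ~ uniquely_decodable (fun x => MDcode ms x \/ x = w).
Proof.
case: ms => // m ms' _ _ _ w w_notin uniq_dec; set ms := m :: ms'.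
have m_ms : m \in ms by rewrite mem_head.
have [ys1 code_ys1 flat_ys1] :=
  code_concat_delim_tail m_ms (delim_tail_cat m [::]).
have [ys2 code_ys2 flat_ys2] :=
  code_concat_delim_tail m_ms (delim_tail_cat m w).
have eq_factorizations : w :: ys1 = ys2.
  apply: uniq_dec; last by rewrite /= flat_ys1 flat_ys2.
  - by move=> x; rewrite inE => /orP [/eqP ->|/code_ys1]; [right|left].
  - by move=> x /code_ys2; left.
by apply: w_notin; apply: code_ys2; rewrite -eq_factorizations mem_head.
Qed.
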